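(* Let $E$ be a locally complete lcHs over $\mathbb{K}$, let $G\subset E'$ be a linear subspace that determines boundedness, and let $\mathcal{F}(\Omega)$ and $\mathcal{F}(\Omega,E)$ be $\varepsilon$-into-compatible. Let $(T^{E},T^{\mathbb{K}})$ be a consistent and strong family for $(\mathcal{F},E)$, let $\nu\colon\omega\to(0,\infty)$ be a weight, and suppose that $\mathcal{F}\nu(\Omega)$ is a Banach space whose closed unit ball $B_{\mathcal{F}\nu}$ is a compact subset of $\mathcal{F}(\Omega)$. Let $U\subset\omega$ be a set of uniqueness for $(T^{\mathbb{K}},\mathcal{F}\nu)$. Then for every $f\in\mathcal{F}\nu_{G}(U,E)$ there exists $F\in\mathcal{F}_{\varepsilon}\nu(\Omega,E)$ with $T^{E}(F)(x)=f(x)$ for all $x\in U$. In other words, the (well-defined, injective) restriction map $R_{U,G}\colon \mathcal{F}_{\varepsilon}\nu(\Omega,E)\to\mathcal{F}\nu_{G}(U,E)$, $F\mapsto (T^{E}(F)(x))_{x\in U}$, is surjective.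
   Context: $\mathbb{K}\in\{\mathbb{R},\mathbb{C}\}$; ''lcHs'' means locally convex Hausdorff space over $\mathbb{K}$; $E$ carries a directed fundamental system of seminorms $(p_\alpha)_{\alpha\in\mathfrak{A}}$ and $E'$ is its dual. $E$ is locally complete if for every closed bounded absolutely convex $D\subset E$ the space $\bigcup_n nD$ normed by the gauge of $D$ is a Banach space. A linear subspace $G\subset E'$ determines boundedness if every $\sigma(E,G)$-bounded subset of $E$ is bounded in $E$. Framework: Let $\Omega,\omega$ be non-empty sets. For an lcHs $F$, $F'_\kappa$ is $F'$ with the topology of uniform convergence on absolutely convex compact subsets of $F$, and $F\varepsilon E:=L_e(F'_\kappa,E)$ is the space of continuous linear maps $F'_\kappa\to E$ with the topology of uniform convergence on equicontinuous subsets of $F'$. Let $\mathcal{F}(\Omega)\subset\mathbb{K}^\Omega$ and $\mathcal{F}(\Omega,E)\subset E^\Omega$ be linear subspaces carrying locally convex Hausdorff topologies with $\delta_x\in\mathcal{F}(\Omega)'$ for all $x\in\Omega$. Define $S\colon\mathcal{F}(\Omega)\varepsilon E\to E^\Omega$, $S(u)(x):=u(\delta_x)$. The spaces are $\varepsilon$-into-compatible if $S$ maps into $\mathcal{F}(\Omega,E)$ and is a linear topological isomorphism onto its range. Let $T^{\mathbb{K}}\colon\mathcal{F}(\Omega)\to\mathbb{K}^\omega$ and $T^{E}\colon\mathcal{F}(\Omega,E)\to E^\omega$ be linear and $T^{\mathbb{K}}_x:=\delta_x\circ T^{\mathbb{K}}$. $(T^E,T^{\mathbb{K}})$ is consistent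 for $(\mathcal{F},E)$ if for every $u\in\mathcal{F}(\Omega)\varepsilon E$ we have $S(u)\in\mathcal{F}(\Omega,E)$ and for all $x\in\omega$: $T^{\mathbb{K}}_x\in\mathcal{F}(\Omega)'$ and $T^{E}(S(u))(x)=u(T^{\mathbb{K}}_x)$. It is strong for $(\mathcal{F},E)$ if for all $e'\in E'$, $f\in\mathcal{F}(\Omega,E)$: $e'\circ f\in\mathcal{F}(\Omega)$ and $T^{\mathbb{K}}(e'\circ f)(x)=e'(T^E(f)(x))$ for all $x\in\omega$. For a weight $\nu\colon\omega\to(0,\infty)$ set $\mathcal{F}\nu(\Omega,E):=\{f\in\mathcal{F}(\Omega,E): |f|_\alpha:=\sup_{x\in\omega}p_\alpha(T^E(f)(x))\nu(x)<\infty\ \forall\alpha\}$ with the topology of these seminorms, and $\mathcal{F}\nu(\Omega):=\{f\in\mathcal{F}(\Omega): |f|_{\mathcal{F}\nu}:=\sup_{x\in\omega}|T^{\mathbb{K}}(f)(x)|\nu(x)<\infty\}$. Let $B_{\mathcal{F}\nu}$ be the closed unit ball of $\mathcal{F}\nu(\Omega)$, $B^{\circ\mathcal{F}'}_{\mathcal{F}\nu}:=\{y'\in\mathcal{F}(\Omega)':|y'(f)|\le1\ \forall f\in B_{\mathcal{F}\nu}\}$ and $\mathcal{F}_\varepsilon\nu(\Omega,E):=S(\{u\in\mathcal{F}(\Omega)\varepsilon E: u(B^{\circ\mathcal{F}'}_{\mathcal{F}\nu})\text{ is bounded in }E\})$. A set $U\subset\omega$ is a set of uniqueness for $(T^{\mathbb{K}},\mathcal{F}\nu)$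 if every $f\in\mathcal{F}\nu(\Omega)$ with $T^{\mathbb{K}}(f)(x)=0$ for all $x\in U$ is $0$. For a separating subspace $G\subset E'$, $\mathcal{F}\nu_G(U,E)$ is the space of functions $f\colon U\to E$ such that for every $e'\in G$ there is $f_{e'}\in\mathcal{F}\nu(\Omega)$ with $T^{\mathbb{K}}(f_{e'})(x)=e'(f(x))$ for all $x\in U$. *)

From Stdlib Require Import Reals List FunctionalExtensionality.
Set Implicit Arguments.
Open Scope R_scope.

Record Cplx := mkC { Cre : R; Cim : R }.
Definition Cadd (z w : Cplx) := mkC (Cre z + Cre w) (Cim z + Cim w).
Definition Cmul (z w : Cplx) :=
  mkC (Cre z * Cre w - Cim z * Cim w) (Cre z * Cim w + Cim z * Cre w).
Definition Copp (z : Cplx) := mkC (- Cre z) (- Cim z).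
Definition Cmod (z : Cplx) := sqrt (Cre z * Cre z + Cim z * Cim z).

Inductive scalar_field := RealField | ComplexField.

Definition K (k : scalar_field) : Type :=
  match k with RealField => R | ComplexField => Cplx end.

Definition Kadd (k : scalar_field) : K k -> K k -> K k :=
  match k return K k -> K k -> K k with RealField => Rplus | ComplexField => Cadd end.
Definition Kmul (k : scalar_field) : K k -> K k -> K k :=
  match k return K k -> K k -> K k with RealField => Rmult | ComplexField => Cmul end.
Definition Kopp (k : scalar_field) : K k -> K k :=
  match k return K k -> K k with RealField => Ropp | ComplexField => Copp end.
Definition K0 (k : scalar_field) : K k :=
  match k return K k with RealField => 0 | ComplexField => mkC 0 0 end.
Definition K1 (k : scalar_field) : K k :=
  match k return K k with RealField => 1 | ComplexField => mkC 1 0 end.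
Definition Kabs (k : scalar_field) : K k -> R :=
  match k return K k -> R with RealField => Rabs | ComplexField => Cmod end.
Definition KofR (k : scalar_field) : R -> K k :=
  match k return R -> K k with RealField => fun r => r | ComplexField => fun r => mkC r 0 end.

Lemma Kadd_assoc k (a b c : K k) : Kadd k a (Kadd k b c) = Kadd k (Kadd k a b) c.
Proof. destruct k; simpl in *; [ring | destruct a, b, c; unfold Cadd; simpl; f_equal; ring]. Qed.
Lemma Kadd_comm k (a b : K k) : Kadd k a b = Kadd k b a.
Proof. destruct k; simpl in *; [ring | destruct a, b; unfold Cadd; simpl; f_equal; ring]. Qed.
Lemma Kadd_0 k (a : K k) : Kadd k a (K0 k) = a.
Proof. destruct k; simpl in *; [ring | destruct a; unfold Cadd; simpl; f_equal; ring]. Qed.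
Lemma Kadd_opp k (a : K k) : Kadd k a (Kopp k a) = K0 k.
Proof. destruct k; simpl in *; [ring | destruct a; unfold Cadd, Copp; simpl; f_equal; ring]. Qed.
Lemma Kmul_1 k (a : K k) : Kmul k (K1 k) a = a.
Proof. destruct k; simpl in *; [ring | destruct a; unfold Cmul; simpl; f_equal; ring]. Qed.
Lemma Kmul_assoc k (a b c : K k) : Kmul k a (Kmul k b c) = Kmul k (Kmul k a b) c.
Proof. destruct k; simpl in *; [ring | destruct a, b, c; unfold Cmul; simpl; f_equal; ring]. Qed.
Lemma Kmul_addr k (a b c : K k) : Kmul k a (Kadd k b c) = Kadd k (Kmul k a b) (Kmul k a c).
Proof. destruct k; simpl in *; [ring | destruct a, b, c; unfold Cmul, Cadd; simpl; f_equal; ring]. Qed.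
Lemma Kmul_addl k (a b c : K k) : Kmul k (Kadd k a b) c = Kadd k (Kmul k a c) (Kmul k b c).
Proof. destruct k; simpl in *; [ring | destruct a, b, c; unfold Cmul, Cadd; simpl; f_equal; ring]. Qed.

Record VSpace (k : scalar_field) := {
  vcar :> Type;
  vadd : vcar -> vcar -> vcar;
  vzero : vcar;
  vopp : vcar -> vcar;
  vscal : K k -> vcar -> vcar;
  vaddA : forall x y z, vadd x (vadd y z) = vadd (vadd x y) z;
  vaddC : forall x y, vadd x y = vadd y x;
  vadd0 : forall x, vadd x vzero = x;
  vaddN : forall x, vadd x (vopp x) = vzero;
  vscal1 : forall x, vscal (K1 k) x = x;
  vscalA : forall a b x, vscal a (vscal b x) = vscal (Kmul k a b) x;
  vscalDr : forall a x y, vscal a (vadd x y) = vadd (vscal a x) (vscal a y);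
  vscalDl : forall a b x, vscal (Kadd k a b) x = vadd (vscal a x) (vscal b x) }.

Arguments vadd {k V} : rename.
Arguments vzero {k} V : rename.
Arguments vopp {k V} : rename.
Arguments vscal {k V} : rename.

Definition vsub k (V : VSpace k) (x y : V) : V := vadd x (vopp y).
Definition lcomb k (V : VSpace k) (a : K k) (x : V) (b : K k) (y : V) : V :=
  vadd (vscal a x) (vscal b y).

Definition Kvs (k : scalar_field) : VSpace k :=
  @Build_VSpace k (K k) (Kadd k) (K0 k) (Kopp k) (Kmul k)
    (@Kadd_assoc k) (@Kadd_comm k) (@Kadd_0 k) (@Kadd_opp k)
    (@Kmul_1 k) (@Kmul_assoc k) (@Kmul_addr k) (@Kmul_addl k).

Section FunVS.
Variables (k : scalar_field) (X : Type) (V : VSpace k).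
Definition fadd (f g : X -> V) : X -> V := fun x => vadd (f x) (g x).
Definition fzero : X -> V := fun _ => vzero V.
Definition fopp (f : X -> V) : X -> V := fun x => vopp (f x).
Definition fscal (a : K k) (f : X -> V) : X -> V := fun x => vscal a (f x).
Lemma faddA f g h : fadd f (fadd g h) = fadd (fadd f g) h.
Proof. apply functional_extensionality; intro; apply vaddA. Qed.
Lemma faddC f g : fadd f g = fadd g f.
Proof. apply functional_extensionality; intro; apply vaddC. Qed.
Lemma fadd0 f : fadd f fzero = f.
Proof. apply functional_extensionality; intro; apply vadd0. Qed.
Lemma faddN f : fadd f (fopp f) = fzero.
Proof. apply functional_extensionality; intro; apply vaddN. Qed.
Lemma fscal1 f : fscal (K1 k) f = f.
Proof. apply functional_extensionality; intro; apply vscal1. Qed.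
Lemma fscalA a b f : fscal a (fscal b f) = fscal (Kmul k a b) f.
Proof. apply functional_extensionality; intro; apply vscalA. Qed.
Lemma fscalDr a f g : fscal a (fadd f g) = fadd (fscal a f) (fscal a g).
Proof. apply functional_extensionality; intro; apply vscalDr. Qed.
Lemma fscalDl a b f : fscal (Kadd k a b) f = fadd (fscal a f) (fscal b f).
Proof. apply functional_extensionality; intro; apply vscalDl. Qed.
Definition fun_vs : VSpace k :=
  @Build_VSpace k (X -> V) fadd fzero fopp fscal
    faddA faddC fadd0 faddN fscal1 fscalA fscalDr fscalDl.
End FunVS.

(** * Locally convex Hausdorff topologies given by a directed fundamental
    system of seminorms, on a linear subspace of a vector space. *)

Record lc_subspace k (V : VSpace k) := {
  ls_mem : V -> Prop;
  ls_idx : Type;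
  ls_sn : ls_idx -> V -> R;
  ls_zero : ls_mem (vzero V);
  ls_add : forall x y, ls_mem x -> ls_mem y -> ls_mem (vadd x y);
  ls_scal : forall a x, ls_mem x -> ls_mem (vscal a x);
  ls_tri : forall i x y, ls_mem x -> ls_mem y ->
             ls_sn i (vadd x y) <= ls_sn i x + ls_sn i y;
  ls_hom : forall i a x, ls_mem x -> ls_sn i (vscal a x) = Kabs k a * ls_sn i x;
  ls_dir : forall i j, exists l C, forall x, ls_mem x ->
             ls_sn i x <= C * ls_sn l x /\ ls_sn j x <= C * ls_sn l x;
  ls_haus : forall x, ls_mem x -> (forall i, ls_sn i x = 0) -> x = vzero V }.

Record lcHs k := {
  lcs_vs :> VSpace k;
  lcs_top :> lc_subspace lcs_vs;
  lcs_full : forall x, ls_mem lcs_top x }.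

Section Notions.
Variables (k : scalar_field) (V : VSpace k) (X : lc_subspace V).

Definition is_linear_on (y : V -> K k) : Prop :=
  forall a x b z, ls_mem X x -> ls_mem X z ->
    y (lcomb V a x b z) = Kadd k (Kmul k a (y x)) (Kmul k b (y z)).

Definition is_dual (y : V -> K k) : Prop :=
  is_linear_on y /\
  exists i C, forall x, ls_mem X x -> Kabs k (y x) <= C * ls_sn X i x.

Definition is_open (O : V -> Prop) : Prop :=
  forall x, ls_mem X x -> O x ->
    exists i eps, 0 < eps /\
      forall z, ls_mem X z -> ls_sn X i (vsub V z x) < eps -> O z.

Definition is_closed (D : V -> Prop) : Prop :=
  (forall x, D x -> ls_mem X x) /\
  forall x, ls_mem X x -> ~ D x ->
    exists i eps, 0 < eps /\
      forall z, ls_mem X z -> ls_sn X i (vsub V z x) < eps -> ~ D z.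

Definition is_compact (C : V -> Prop) : Prop :=
  (forall x, C x -> ls_mem X x) /\
  forall (I : Type) (O : I -> V -> Prop),
    (forall i, is_open (O i)) ->
    (forall x, C x -> exists i, O i x) ->
    exists l : list I, forall x, C x -> exists i, In i l /\ O i x.

Definition abs_convex (C : V -> Prop) : Prop :=
  forall x z a b, C x -> C z -> Kabs k a + Kabs k b <= 1 -> C (lcomb V a x b z).

Definition is_bounded (B : V -> Prop) : Prop :=
  forall i, exists C, forall x, B x -> ls_sn X i x <= C.

Definition equicontinuous (M : (V -> K k) -> Prop) : Prop :=
  (forall y, M y -> is_dual y) /\
  exists i C, forall y, M y -> forall x, ls_mem X x -> Kabs k (y x) <= C * ls_sn X i x.
End Notions.
Arguments abs_convex {k V} C.

Section LocComplete.
Variables (k : scalar_field) (E : lcHs k).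

Definition in_mult (D : E -> Prop) (t : R) (x : E) : Prop :=
  exists d, D d /\ x = vscal (KofR k t) d.
Definition in_span (D : E -> Prop) (x : E) : Prop :=
  exists n : nat, in_mult D (INR n) x.

Definition locally_complete : Prop :=
  forall D : E -> Prop,
    is_closed E D -> is_bounded E D -> abs_convex D ->
    forall xs : nat -> E,
      (forall n, in_span D (xs n)) ->
      (forall eps, 0 < eps -> exists N, forall n m, (N <= n)%nat -> (N <= m)%nat ->
          in_mult D eps (vsub E (xs n) (xs m))) ->
      exists x, in_span D x /\
        forall eps, 0 < eps -> exists N, forall n, (N <= n)%nat ->
          in_mult D eps (vsub E (xs n) x).

Definition determines_boundedness (G : (E -> K k) -> Prop) : Prop :=
  (forall g, G g -> is_dual E g) /\
  G (fun _ => K0 k) /\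
  (forall a g b h, G g -> G h -> G (fun x => Kadd k (Kmul k a (g x)) (Kmul k b (h x)))) /\
  forall B : E -> Prop,
    (forall g, G g -> exists C, forall x, B x -> Kabs k (g x) <= C) ->
    is_bounded E B.
End LocComplete.

Section Eps.
Variables (k : scalar_field) (Om om : Type) (E : lcHs k).
Notation FunK := (fun_vs Om (Kvs k)).
Notation FunE := (fun_vs Om E).
Variables (FO : lc_subspace FunK) (FOE : lc_subspace FunE).

(** u : F(Om)'_kappa -> E is in F(Om) eps E (continuous linear maps) *)
Definition in_eps (u : ((Om -> K k) -> K k) -> E) : Prop :=
  (forall y1 y2 a b, is_dual FO y1 -> is_dual FO y2 ->
     u (fun f => Kadd k (Kmul k a (y1 f)) (Kmul k b (y2 f)))
       = lcomb E a (u y1) b (u y2)) /\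
  forall i : ls_idx E, exists (Kset : (Om -> K k) -> Prop) (C : R),
    abs_convex (V:=FunK) Kset /\ is_compact FO Kset /\ 0 <= C /\
    forall y, is_dual FO y ->
      forall s, 0 <= s -> (forall f, Kset f -> Kabs k (y f) <= s) ->
        ls_sn E i (u y) <= C * s.

Definition Smap (u : ((Om -> K k) -> K k) -> E) : Om -> E :=
  fun x => u (fun f => f x).

Definition eps_into_compatible : Prop :=
  (forall x : Om, is_dual FO (fun f => f x)) /\
  (forall u, in_eps u -> ls_mem FOE (Smap u)) /\
  (forall u1 u2, in_eps u1 -> in_eps u2 -> Smap u1 = Smap u2 ->
     forall y, is_dual FO y -> u1 y = u2 y) /\
  (forall g : ls_idx FOE, exists M (i : ls_idx E) C,
     equicontinuous FO M /\ 0 <= C /\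
     forall u, in_eps u -> forall s, 0 <= s -> (forall y, M y -> ls_sn E i (u y) <= s) ->
       ls_sn FOE g (Smap u) <= C * s) /\
  (forall M (i : ls_idx E), equicontinuous FO M ->
     exists (g : ls_idx FOE) C, forall u, in_eps u -> forall y, M y ->
       ls_sn E i (u y) <= C * ls_sn FOE g (Smap u)).

Variables (TE : (Om -> E) -> om -> E) (TK : (Om -> K k) -> om -> K k).

Definition T_linear : Prop :=
  (forall a f b g, ls_mem FO f -> ls_mem FO g ->
     TK (lcomb FunK a f b g) = lcomb (fun_vs om (Kvs k)) a (TK f) b (TK g)) /\
  (forall a f b g, ls_mem FOE f -> ls_mem FOE g ->
     TE (lcomb FunE a f b g) = lcomb (fun_vs om E) a (TE f) b (TE g)).

Definition consistent : Prop :=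
  forall u, in_eps u ->
    ls_mem FOE (Smap u) /\
    forall x : om, is_dual FO (fun f => TK f x) /\ TE (Smap u) x = u (fun f => TK f x).

Definition strong : Prop :=
  forall e' : E -> K k, is_dual E e' -> forall f : Om -> E, ls_mem FOE f ->
    ls_mem FO (fun w => e' (f w)) /\
    forall x : om, TK (fun w => e' (f w)) x = e' (TE f x).

Variable nu : om -> R.

Definition Fnu (f : Om -> K k) : Prop :=
  ls_mem FO f /\ exists C, forall x, Kabs k (TK f x) * nu x <= C.

Definition Bnu (f : Om -> K k) : Prop :=
  Fnu f /\ forall x, Kabs k (TK f x) * nu x <= 1.

Definition Fnu_Banach : Prop :=
  (forall f, Fnu f -> (forall x, TK f x = K0 k) -> f = fun _ => K0 k) /\
  forall fs : nat -> Om -> K k, (forall n, Fnu (fs n)) ->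
    (forall eps, 0 < eps -> exists N, forall n m, (N <= n)%nat -> (N <= m)%nat ->
       forall x, Kabs k (TK (vsub FunK (fs n) (fs m)) x) * nu x <= eps) ->
    exists f, Fnu f /\
      forall eps, 0 < eps -> exists N, forall n, (N <= n)%nat ->
        forall x, Kabs k (TK (vsub FunK (fs n) f) x) * nu x <= eps.

Definition Bnu_polar (y : (Om -> K k) -> K k) : Prop :=
  is_dual FO y /\ forall f, Bnu f -> Kabs k (y f) <= 1.

Definition Feps_nu (F : Om -> E) : Prop :=
  exists u, in_eps u /\ F = Smap u /\
    is_bounded E (fun e => exists y, Bnu_polar y /\ e = u y).

Definition set_of_uniqueness (U : om -> Prop) : Prop :=
  forall f, Fnu f -> (forall x, U x -> TK f x = K0 k) -> f = fun _ => K0 k.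

Definition FnuG (G : (E -> K k) -> Prop) (U : om -> Prop) (f : om -> E) : Prop :=
  forall e', G e' -> exists fe, Fnu fe /\ forall x, U x -> TK fe x = e' (f x).
End Eps.

(** Fix [f] in [F nu_G(U, E)] and, for each [e'] in [G], an extension [f_e'] in [F nu(Om)] of
    [e' o f] from [U].  The wanted [u : F(Om)' -> E] must satisfy [e' (u y) = y f_e'].
    Since [U] is a set of uniqueness and the unit ball [B] of [F nu(Om)] is compact, every [y]
    in [F(Om)'] is a uniform limit on [B] of combinations [sum_i a_i T_{x_i}] with [x_i] in [U]:
    each point of [B] is handled by a single such combination, compactness leaves finitely many,
    and Ky Fan's minimax lemma for affine functions merges them into one.  The corresponding
    vectors [sum_i a_i f(x_i)] form a Cauchy sequence in the normed space [E_D] spanned by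
    [D = {x | |e' x| <= N e' for all e' in G}], where [N e'] bounds [|f_e'|_{F nu}]; [D] is
    closed, bounded and absolutely convex because [G] determines boundedness, and local
    completeness yields the limit [u y].  Finally [u] maps the polar of [B] into [D], hence is
    continuous on [F(Om)'_kappa], and consistency gives [T^E (S u) x = u (T_x) = f x] on [U]. *)

From Stdlib Require Import Reals Lra Psatz List FunctionalExtensionality ClassicalEpsilon Classical.
From Coquelicot Require Complex.
Open Scope R_scope.

Ltac kring :=
  match goal with |- @eq (K ?k) _ _ =>
    destruct k; simpl in *;
    [ ring
    | repeat match goal with c : Cplx |- _ => destruct c end;
      unfold Cadd, Cmul, Copp; simpl; f_equal; ring ] end.

Definition Ksub (k : scalar_field) (a b : K k) : K k := Kadd k a (Kopp k b).

Definition KRe (k : scalar_field) : K k -> R :=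
  match k return K k -> R with RealField => fun r => r | ComplexField => Cre end.

Section Scalars.
Context {k : scalar_field}.
Implicit Types a b c z : K k.

Lemma Kmul_0l a : Kmul k (K0 k) a = K0 k. Proof. kring. Qed.
Lemma Kmul_0r a : Kmul k a (K0 k) = K0 k. Proof. kring. Qed.
Lemma Kadd_0l a : Kadd k (K0 k) a = a. Proof. kring. Qed.
Lemma KofR_0 : KofR k 0 = K0 k. Proof. kring. Qed.
Lemma KofR_1 : KofR k 1 = K1 k. Proof. kring. Qed.
Lemma KofR_add r s : KofR k (r + s) = Kadd k (KofR k r) (KofR k s). Proof. kring. Qed.
Lemma KofR_mul r s : KofR k (r * s) = Kmul k (KofR k r) (KofR k s). Proof. kring. Qed.
Lemma Ksub_add a b : Kadd k b (Ksub k a b) = a. Proof. unfold Ksub; kring. Qed.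

Lemma Ksub_affine a b c z1 z2 : Kadd k a b = K1 k ->
  Ksub k c (Kadd k (Kmul k a z1) (Kmul k b z2))
  = Kadd k (Kmul k a (Ksub k c z1)) (Kmul k b (Ksub k c z2)).
Proof. intro H; rewrite <- (Kmul_1 k c) at 1; rewrite <- H; unfold Ksub; kring. Qed.

Lemma Cmod_Coquelicot (w : Cplx) : Cmod w = Complex.Cmod (Cre w, Cim w).
Proof. unfold Cmod, Complex.Cmod; simpl; f_equal; ring. Qed.

Lemma Kabs_ge0 a : 0 <= Kabs k a.
Proof. destruct k; [apply Rabs_pos | apply sqrt_pos]. Qed.

Lemma Kabs_mul a b : Kabs k (Kmul k a b) = Kabs k a * Kabs k b.
Proof.
  destruct k; simpl in *; [apply Rabs_mult|].
  rewrite !Cmod_Coquelicot; exact (Complex.Cmod_mult (Cre a, Cim a) (Cre b, Cim b)).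
Qed.

Lemma Kabs_add a b : Kabs k (Kadd k a b) <= Kabs k a + Kabs k b.
Proof.
  destruct k; simpl in *; [apply Rabs_triang|].
  rewrite !Cmod_Coquelicot; exact (Complex.Cmod_triangle (Cre a, Cim a) (Cre b, Cim b)).
Qed.

Lemma Kabs_KofR r : Kabs k (KofR k r) = Rabs r.
Proof.
  destruct k; simpl; [reflexivity|].
  rewrite Cmod_Coquelicot; apply Complex.Cmod_R.
Qed.

Lemma Kabs_0 : Kabs k (K0 k) = 0.
Proof. rewrite <- KofR_0, Kabs_KofR; apply Rabs_R0. Qed.

Lemma Kabs_1 : Kabs k (K1 k) = 1.
Proof. rewrite <- KofR_1, Kabs_KofR; apply Rabs_R1. Qed.

Lemma Kabs_opp a : Kabs k (Kopp k a) = Kabs k a.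
Proof.
  replace (Kopp k a) with (Kmul k (KofR k (-1)) a) by kring.
  rewrite Kabs_mul, Kabs_KofR, Rabs_left by lra; ring.
Qed.

Lemma Kabs_eq0 a : Kabs k a = 0 -> a = K0 k.
Proof.
  destruct k; simpl in *.
  - intro H; destruct (Req_dec a 0) as [|Ha]; [assumption|].
    pose proof (Rabs_pos_lt a Ha); lra.
  - rewrite Cmod_Coquelicot; intro H; apply Complex.Cmod_eq_0 in H.
    destruct a; injection H as -> ->; reflexivity.
Qed.

Lemma Ksub_eq0 a b : Ksub k a b = K0 k -> a = b.
Proof. intro H; rewrite <- (Ksub_add a b), H; kring. Qed.

Lemma Kabs_sub_tri a b c : Kabs k (Ksub k a c) <= Kabs k (Ksub k a b) + Kabs k (Ksub k b c).
Proof. replace (Ksub k a c) with (Kadd k (Ksub k a b) (Ksub k b c)) by (unfold Ksub; kring). apply Kabs_add. Qed.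

Lemma Kabs_sub_sym a b : Kabs k (Ksub k a b) = Kabs k (Ksub k b a).
Proof. replace (Ksub k a b) with (Kopp k (Ksub k b a)) by (unfold Ksub; kring). apply Kabs_opp. Qed.

Lemma Kabs_sub_le a b : Kabs k (Ksub k a b) <= Kabs k a + Kabs k b.
Proof. rewrite <- (Kabs_opp b); apply Kabs_add. Qed.

Lemma Kabs_le_sub a b : Kabs k a <= Kabs k b + Kabs k (Ksub k b a).
Proof. replace a with (Ksub k b (Ksub k b a)) at 1 by (unfold Ksub; kring); apply Kabs_sub_le. Qed.

Lemma Ksub_sub_r a b c : Ksub k (Ksub k a c) (Ksub k b c) = Ksub k a b.
Proof. unfold Ksub; kring. Qed.

Lemma Ksub_telescope a b c z : Ksub k (Kadd k c z) a = Ksub k (Ksub k b a) (Ksub k (Ksub k b c) z).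
Proof. unfold Ksub; kring. Qed.

Lemma Ksub_small_eq a b : (forall eta, 0 < eta -> Kabs k (Ksub k a b) <= eta) -> a = b.
Proof.
  intro H; apply Ksub_eq0, Kabs_eq0; pose proof (Kabs_ge0 (Ksub k a b)).
  destruct (Req_dec (Kabs k (Ksub k a b)) 0) as [|Hne]; [assumption|].
  specialize (H (Kabs k (Ksub k a b) / 2)); lra.
Qed.

Lemma KRe_add a b : KRe k (Kadd k a b) = KRe k a + KRe k b.
Proof. destruct k; [reflexivity | destruct a, b; reflexivity]. Qed.
Lemma KRe_realmul t a : KRe k (Kmul k (KofR k t) a) = t * KRe k a.
Proof. destruct k; simpl; [reflexivity | destruct a; simpl; ring]. Qed.
Lemma KRe_sub a b : KRe k (Ksub k a b) = KRe k a - KRe k b.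
Proof. destruct k; simpl; [reflexivity | destruct a, b; simpl; ring]. Qed.
Lemma KRe_0 : KRe k (K0 k) = 0.
Proof. destruct k; reflexivity. Qed.

Lemma KRe_le a : KRe k a <= Kabs k a.
Proof.
  destruct k; simpl; [apply Rle_abs|].
  destruct a as [x y]; unfold Cmod; simpl.
  destruct (Rle_or_lt x 0) as [Hx|Hx]; [pose proof (sqrt_pos (x*x + y*y)); lra|].
  rewrite <- (sqrt_square x) at 1 by lra. apply sqrt_le_1_alt; nra.
Qed.

Lemma K_rotate z : exists c, Kabs k c = 1 /\ KRe k (Kmul k c z) = Kabs k z.
Proof.
  destruct k; simpl in *.
  - destruct (Rle_or_lt 0 z) as [Hz|Hz].
    + exists 1; rewrite Rabs_R1, Rabs_right by lra; split; ring.
    + exists (-1); rewrite (Rabs_left (-1)), (Rabs_left z) by lra; split; ring.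
  - destruct z as [x y]; unfold Cmod; simpl.
    set (m := sqrt (x*x + y*y)).
    assert (Hmm : m * m = x*x + y*y) by (apply sqrt_sqrt; nra).
    destruct (Req_dec m 0) as [H0|H0].
    + exists (mkC 1 0); simpl; split.
      * replace (1*1 + 0*0) with 1 by ring; apply sqrt_1.
      * rewrite H0; assert (x = 0) by nra; subst; ring.
    + exists (mkC (x/m) (-y/m)); simpl; split.
      * replace (x/m * (x/m) + -y/m * (-y/m)) with ((x*x + y*y) / (m*m)) by (field; assumption).
        rewrite <- Hmm, Rdiv_diag by nra; apply sqrt_1.
      * replace (x/m * x - -y/m * y) with ((x*x + y*y) / m) by (field; assumption).
        rewrite <- Hmm; field; assumption.
Qed.

Lemma K_solve z r : z <> K0 k -> exists t, KRe k (Kmul k t z) = r.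
Proof.
  intro Hz; destruct k; simpl in *.
  - exists (r / z); field; exact Hz.
  - destruct z as [x y].
    assert (Hm : x*x + y*y <> 0).
    { intro H; apply Hz; assert (x = 0) by nra; assert (y = 0) by nra; subst; reflexivity. }
    exists (mkC (r * x / (x*x + y*y)) (- r * y / (x*x + y*y))); simpl; field; exact Hm.
Qed.

End Scalars.

Section VectorSpace.
Context {k : scalar_field} (V : VSpace k).
Implicit Types x y : V.

Lemma vadd0l x : vadd (vzero V) x = x.
Proof. rewrite vaddC; apply vadd0. Qed.

Lemma vscal_0 x : vscal (K0 k) x = vzero V.
Proof.
  set (w := vscal (K0 k) x).
  assert (Hw : vadd w w = w) by (unfold w; rewrite <- vscalDl, Kadd_0; reflexivity).
  transitivity (vadd (vadd w w) (vopp w)).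
  - rewrite <- vaddA, vaddN, vadd0; reflexivity.
  - rewrite Hw; apply vaddN.
Qed.

Lemma vopp_scal x : vopp x = vscal (Kopp k (K1 k)) x.
Proof.
  assert (H : vadd (vscal (Kopp k (K1 k)) x) x = vzero V).
  { rewrite <- (vscal1 _ x) at 2; rewrite <- vscalDl, Kadd_comm, Kadd_opp; apply vscal_0. }
  rewrite <- (vadd0l (vopp x)), <- H, <- vaddA, vaddN, vadd0; reflexivity.
Qed.

Lemma vscal_zero a : vscal a (vzero V) = vzero V.
Proof. rewrite <- (vscal_0 (vzero V)), vscalA, Kmul_0r; reflexivity. Qed.

Lemma lcomb_0r a x z : lcomb V a x (K0 k) z = vscal a x.
Proof. unfold lcomb; rewrite vscal_0; apply vadd0. Qed.

Lemma vsub_add x y : vadd y (vsub V x y) = x.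
Proof. unfold vsub; rewrite vaddA, (vaddC _ y x), <- vaddA, vaddN, vadd0; reflexivity. Qed.

End VectorSpace.

Section Seminorms.
Context {k : scalar_field} {V : VSpace k} {X : lc_subspace V}.
Implicit Types x z : V.

Lemma ls_sub {x z} : ls_mem X x -> ls_mem X z -> ls_mem X (vsub V x z).
Proof. intros; apply ls_add; [|rewrite vopp_scal; apply ls_scal]; assumption. Qed.

Lemma ls_lcomb a x b z : ls_mem X x -> ls_mem X z -> ls_mem X (lcomb V a x b z).
Proof. intros; apply ls_add; apply ls_scal; assumption. Qed.

Lemma sn_zero i : ls_sn X i (vzero V) = 0.
Proof. rewrite <- (vscal_0 V (vzero V)), ls_hom, Kabs_0 by apply ls_zero; ring. Qed.

Lemma sn_ge0 i {x} : ls_mem X x -> 0 <= ls_sn X i x.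
Proof.
  intro Hx; assert (Hox : ls_mem X (vopp x)) by (rewrite vopp_scal; apply ls_scal, Hx).
  pose proof (ls_tri X i x (vopp x) Hx Hox) as H.
  rewrite vaddN, sn_zero, vopp_scal, ls_hom, Kabs_opp, Kabs_1 in H by assumption; lra.
Qed.

Lemma sn_scal_real i t x : ls_mem X x -> ls_sn X i (vscal (KofR k t) x) = Rabs t * ls_sn X i x.
Proof. intro; rewrite ls_hom, Kabs_KofR by assumption; reflexivity. Qed.

Section Linear.
Variables (y : V -> K k) (Hy : is_linear_on X y).

Lemma lin_scal a x : ls_mem X x -> y (vscal a x) = Kmul k a (y x).
Proof. intro Hx; rewrite <- (lcomb_0r V a x x), Hy, Kmul_0l, Kadd_0 by assumption; reflexivity. Qed.

Lemma lin_add x z : ls_mem X x -> ls_mem X z -> y (vadd x z) = Kadd k (y x) (y z).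
Proof.
  intros Hx Hz; pose proof (Hy (K1 k) x (K1 k) z Hx Hz) as H.
  unfold lcomb in H; rewrite !vscal1, !Kmul_1 in H; exact H.
Qed.

Lemma lin_zero : y (vzero V) = K0 k.
Proof. rewrite <- (vscal_0 V (vzero V)), lin_scal, Kmul_0l by apply ls_zero; reflexivity. Qed.

Lemma lin_sub x z : ls_mem X x -> ls_mem X z -> y (vsub V x z) = Ksub k (y x) (y z).
Proof.
  intros Hx Hz; unfold vsub, Ksub.
  rewrite lin_add, vopp_scal, lin_scal by (try rewrite vopp_scal; try apply ls_scal; assumption).
  f_equal; kring.
Qed.

End Linear.

Lemma dual_bound {y} : is_dual X y ->
  exists i C, 0 <= C /\ forall x, ls_mem X x -> Kabs k (y x) <= C * ls_sn X i x.
Proof.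
  intros [_ [i [C HC]]]; exists i, (Rabs C); split; [apply Rabs_pos|].
  intros x Hx; eapply Rle_trans; [apply HC, Hx|].
  apply Rmult_le_compat_r; [apply sn_ge0, Hx | apply Rle_abs].
Qed.

Lemma dual_ext {y1 y2} : is_dual X y1 -> (forall x, y1 x = y2 x) -> is_dual X y2.
Proof. intros H He; replace y2 with y1 by (apply functional_extensionality; assumption); exact H. Qed.

Lemma dual_lcomb a {y1} b {y2} : is_dual X y1 -> is_dual X y2 ->
  is_dual X (fun x => Kadd k (Kmul k a (y1 x)) (Kmul k b (y2 x))).
Proof.
  intros H1 H2; split.
  - intros c x d z Hx Hz; rewrite (proj1 H1), (proj1 H2) by assumption.
    destruct k; simpl in *; [ring|].
    destruct a, b, c, d, (y1 x), (y1 z), (y2 x), (y2 z); unfold Cadd, Cmul; simpl; f_equal; ring.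
  - destruct (dual_bound H1) as [i [C1 [HC1 B1]]], (dual_bound H2) as [j [C2 [HC2 B2]]].
    destruct (ls_dir X i j) as [l [D HD]].
    exists l, ((Kabs k a * C1 + Kabs k b * C2) * Rabs D); intros x Hx.
    destruct (HD x Hx) as [D1 D2].
    pose proof (B1 x Hx); pose proof (B2 x Hx); pose proof (Rle_abs D).
    pose proof (sn_ge0 l Hx); pose proof (sn_ge0 i Hx); pose proof (sn_ge0 j Hx).
    pose proof (Kabs_ge0 a); pose proof (Kabs_ge0 b).
    eapply Rle_trans; [apply Kabs_add|]; rewrite !Kabs_mul.
    assert (ls_sn X i x <= Rabs D * ls_sn X l x) by nra.
    assert (ls_sn X j x <= Rabs D * ls_sn X l x) by nra.
    assert (Kabs k (y1 x) <= C1 * (Rabs D * ls_sn X l x)) by nra.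
    assert (Kabs k (y2 x) <= C2 * (Rabs D * ls_sn X l x)) by nra.
    apply Rle_trans with (Kabs k a * (C1 * (Rabs D * ls_sn X l x))
                          + Kabs k b * (C2 * (Rabs D * ls_sn X l x))); [|lra].
    apply Rplus_le_compat; apply Rmult_le_compat_l; assumption.
Qed.

Lemma dual_sub {y1 y2} : is_dual X y1 -> is_dual X y2 -> is_dual X (fun x => Ksub k (y1 x) (y2 x)).
Proof.
  intros H1 H2; apply (dual_ext (dual_lcomb (K1 k) (Kopp k (K1 k)) H1 H2)).
  intro; unfold Ksub; kring.
Qed.

Lemma dual_re_lt_open {y} c : is_dual X y -> is_open X (fun x => KRe k (y x) < c).
Proof.
  intros Hy x Hx Hxc; destruct (dual_bound Hy) as [i [C [HC B]]].
  exists i, ((c - KRe k (y x)) / (C + 1)); split; [apply Rdiv_lt_0_compat; lra|].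
  intros z Hz Hzx.
  assert (Hd : Kabs k (y (vsub V z x)) <= C * ls_sn X i (vsub V z x)) by (apply B, ls_sub; assumption).
  rewrite (lin_sub _ (proj1 Hy)) in Hd by assumption.
  pose proof (KRe_le (Ksub k (y z) (y x))) as HRe; rewrite KRe_sub in HRe.
  pose proof (sn_ge0 i (ls_sub Hz Hx)).
  assert (Hq : (C + 1) * ((c - KRe k (y x)) / (C + 1)) = c - KRe k (y x)) by (field; lra).
  nra.
Qed.

Lemma balanced_re_le_abs_le {y} (S : V -> Prop) eps : is_linear_on X y ->
  (forall x, S x -> ls_mem X x) ->
  (forall c x, Kabs k c <= 1 -> S x -> S (vscal c x)) ->
  (forall x, S x -> KRe k (y x) <= eps) -> forall x, S x -> Kabs k (y x) <= eps.
Proof.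
  intros Hy HSX HSbal Hre x Hx; destruct (K_rotate (y x)) as [c [Hc1 Hc]].
  rewrite <- Hc, <- (lin_scal _ Hy) by (apply HSX, Hx).
  apply Hre, HSbal; [lra | exact Hx].
Qed.

End Seminorms.

Section PlaneSeparation.
Variable P : R -> R -> Prop.
Hypothesis P_convex : forall {t a b c d}, 0 <= t <= 1 -> P a b -> P c d ->
  P (t * a + (1 - t) * c) (t * b + (1 - t) * d).
Hypothesis P_no_quadrant : forall {a b}, P a b -> a <= 0 \/ b <= 0.

Lemma plane_cross_le {a1 b1 a2 b2} : P a1 b1 -> P a2 b2 -> 0 < a1 -> 0 < b2 ->
  a1 * b2 <= a2 * b1.
Proof.
  intros H1 H2 Ha1 Hb2.
  assert (Hb1 : b1 <= 0) by (destruct (P_no_quadrant H1); lra).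
  assert (Ha2 : a2 <= 0) by (destruct (P_no_quadrant H2); lra).
  apply Rnot_lt_le; intro Hlt.
  (* the convex combination on the diagonal lies in the open quadrant *)
  set (den := a1 - a2 + (b2 - b1)); set (t := (b2 - a2) / den).
  assert (Hden : 0 < den) by (unfold den; lra).
  assert (Ht : 0 <= t <= 1).
  { assert (Htd : t * den = b2 - a2) by (unfold t; field; lra).
    split; apply Rmult_le_reg_r with den; unfold den in *; lra. }
  assert (Hv : 0 < (a1 * b2 - a2 * b1) / den) by (apply Rdiv_lt_0_compat; lra).
  destruct (P_no_quadrant (P_convex Ht H1 H2)) as [H|H].
  - replace (t * a1 + (1 - t) * a2) with ((a1 * b2 - a2 * b1) / den) in H
      by (unfold t, den in *; field; lra); lra.
  - replace (t * b1 + (1 - t) * b2) with ((a1 * b2 - a2 * b1) / den) in H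
      by (unfold t, den in *; field; lra); lra.
Qed.

Lemma plane_separation : exists l, 0 <= l <= 1 /\ forall a b, P a b -> l * a + (1 - l) * b <= 0.
Proof.
  destruct (classic (exists a b, P a b /\ 0 < a)) as [[a1 [b1 [H1 Ha1]]]|Na].
  2: { exists 1; split; [lra|]; intros a b H.
       destruct (Rle_or_lt a 0); [lra | exfalso; apply Na; exists a, b; auto]. }
  destruct (classic (exists a b, P a b /\ 0 < b)) as [[a2 [b2 [H2 Hb2]]]|Nb].
  2: { exists 0; split; [lra|]; intros a b H.
       destruct (Rle_or_lt b 0); [lra | exfalso; apply Nb; exists a, b; auto]. }
  (* the separating weight is the supremum of [b / (b - a)] over the points with [b > 0] *)
  set (Q := fun v => exists a b, P a b /\ 0 < b /\ v = b / (b - a)).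
  assert (Hupper : forall a b, P a b -> 0 < a -> forall v, Q v -> v <= - b / (a - b)).
  { intros a b H Ha v [c [d [Hcd [Hd ->]]]].
    assert (b <= 0) by (destruct (P_no_quadrant H); lra).
    assert (c <= 0) by (destruct (P_no_quadrant Hcd); lra).
    pose proof (plane_cross_le H Hcd Ha Hd).
    apply Rmult_le_reg_r with ((d - c) * (a - b)); [nra|].
    replace (d / (d - c) * ((d - c) * (a - b))) with (d * (a - b)) by (field; lra).
    replace (- b / (a - b) * ((d - c) * (a - b))) with (- b * (d - c)) by (field; lra).
    nra. }
  destruct (completeness Q) as [m [Hub Hlub]].
  { exists (- b1 / (a1 - b1)); intros v Hv; exact (Hupper _ _ H1 Ha1 v Hv). }
  { exists (b2 / (b2 - a2)), a2, b2; auto. }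
  assert (Hle_m : forall a b, P a b -> 0 < b -> b <= m * (b - a)).
  { intros a b H Hb; assert (a <= 0) by (destruct (P_no_quadrant H); lra).
    assert (Hq : b / (b - a) <= m) by (apply Hub; exists a, b; auto).
    apply Rmult_le_compat_r with (r := b - a) in Hq; [|lra].
    replace (b / (b - a) * (b - a)) with b in Hq by (field; lra); lra. }
  assert (Hm_le : forall a b, P a b -> 0 < a -> m * (a - b) <= - b).
  { intros a b H Ha; assert (b <= 0) by (destruct (P_no_quadrant H); lra).
    assert (Hq : m <= - b / (a - b)) by (apply Hlub; intros v Hv; exact (Hupper _ _ H Ha v Hv)).
    apply Rmult_le_compat_r with (r := a - b) in Hq; [|lra].
    replace (- b / (a - b) * (a - b)) with (- b) in Hq by (field; lra); lra. }
  exists m; split.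
  - pose proof (Hle_m _ _ H2 Hb2); pose proof (Hm_le _ _ H1 Ha1).
    assert (a2 <= 0) by (destruct (P_no_quadrant H2); lra).
    assert (b1 <= 0) by (destruct (P_no_quadrant H1); lra).
    split; nra.
  - intros a b H.
    destruct (Rlt_or_le 0 a) as [Ha|Ha]; [pose proof (Hm_le _ _ H Ha); lra|].
    destruct (Rlt_or_le 0 b) as [Hb|Hb]; [pose proof (Hle_m _ _ H Hb); lra|].
    pose proof (Hle_m _ _ H2 Hb2); pose proof (Hm_le _ _ H1 Ha1).
    assert (a2 <= 0) by (destruct (P_no_quadrant H2); lra).
    assert (b1 <= 0) by (destruct (P_no_quadrant H1); lra).
    assert (0 <= m <= 1) by (split; nra).
    nra.
Qed.

End PlaneSeparation.

Section MinimaxCover.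
Variables (X : Type) (cc : R -> X -> X -> X) (S0 : X -> Prop) (F : (X -> R) -> Prop).
Hypothesis F_affine : forall {g}, F g -> forall t p q, 0 <= t <= 1 -> S0 p -> S0 q ->
  g (cc t p q) = t * g p + (1 - t) * g q.
Hypothesis F_convex : forall {t g1 g2}, 0 <= t <= 1 -> F g1 -> F g2 ->
  exists h, F h /\ forall x, h x = t * g1 x + (1 - t) * g2 x.
Hypothesis F_inhabited : exists g, F g.

Definition cc_convex (S : X -> Prop) : Prop :=
  forall t p q, 0 <= t <= 1 -> S p -> S q -> S (cc t p q).

(** Ky Fan's lemma for finitely many affine functions: by induction, the function obtained for
    the part of [S] where [g > eps] is merged with [g] by [plane_separation]. *)
Lemma finite_cover_minimax eps (gs : list (X -> R)) : (forall g, In g gs -> F g) ->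
  forall S, cc_convex S -> (forall x, S x -> S0 x) ->
  (forall x, S x -> exists g, In g gs /\ g x <= eps) ->
  exists h, F h /\ forall x, S x -> h x <= eps.
Proof.
  induction gs as [|g gs IH]; intros Hgs S HS HS0 Hcov.
  - destruct F_inhabited as [g0 Hg0]; exists g0; split; [exact Hg0|].
    intros x Hx; destruct (Hcov x Hx) as [g [[] _]].
  - assert (Hg : F g) by (apply Hgs; left; reflexivity).
    destruct (IH (fun g' H => Hgs g' (or_intror H)) (fun x => S x /\ eps < g x))
      as [h' [Hh' Hh'eps]].
    + intros t p q Ht [Hp Gp] [Hq Gq]; split; [apply HS; assumption|].
      rewrite (F_affine Hg) by auto; destruct (Rle_or_lt (g p) (g q)); nra.
    + intros x [Hx _]; auto.
    + intros x [Hx Gx]; destruct (Hcov x Hx) as [g' [[<-|Hin] Hg']]; [lra|eauto].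
    + destruct (@plane_separation (fun a b => exists x, S x /\ a = h' x - eps /\ b = g x - eps))
        as [l [Hl Hsep]].
      * intros t a b c d Ht [p [Hp [-> ->]]] [q [Hq [-> ->]]].
        exists (cc t p q); split; [apply HS; assumption|].
        rewrite (F_affine Hh'), (F_affine Hg) by auto; split; ring.
      * intros a b [x [Hx [-> ->]]].
        destruct (Rle_or_lt (g x) eps); [right; lra|].
        left; pose proof (Hh'eps x (conj Hx H)); lra.
      * destruct (F_convex Hl Hh' Hg) as [h [Hh Hhx]]; exists h; split; [exact Hh|].
        intros x Hx; rewrite Hhx.
        pose proof (Hsep _ _ (ex_intro _ x (conj Hx (conj eq_refl eq_refl)))); lra.
Qed.

End MinimaxCover.

Lemma inv_succ_bounds n : 0 < / INR (S n) <= 1.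
Proof.
  pose proof (pos_INR n); rewrite S_INR; split; [apply Rinv_0_lt_compat; lra|].
  rewrite <- Rinv_1; apply Rinv_le_contravar; lra.
Qed.

Lemma inv_succ_small eps : 0 < eps -> exists N, forall n, (N <= n)%nat -> / INR (S n) <= eps.
Proof.
  intro Heps; destruct (archimed_cor1 eps Heps) as [N [HN HN0]]; exists N; intros n Hn.
  apply Rle_trans with (/ INR N); [|lra].
  apply Rinv_le_contravar; [apply lt_0_INR; assumption | apply le_INR; lia].
Qed.

Section Extension.
Context {k : scalar_field} {Om om : Type}.
Notation FunK := (fun_vs Om (Kvs k)).
Variables (FO : lc_subspace FunK) (TK : (Om -> K k) -> om -> K k) (nu : om -> R) (U : om -> Prop).
Hypothesis TK_linear : forall a f b g, ls_mem FO f -> ls_mem FO g ->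
  TK (lcomb FunK a f b g) = lcomb (fun_vs om (Kvs k)) a (TK f) b (TK g).
Hypothesis TK_dual : forall x, is_dual FO (fun g => TK g x).
Hypothesis nu_pos : forall x, 0 < nu x.
Hypothesis om_inhabited : inhabited om.
Hypothesis B_compact : is_compact FO (Bnu FO TK nu).
Hypothesis U_uniqueness : set_of_uniqueness FO TK nu U.

Notation B := (Bnu FO TK nu).

Lemma TK_lcomb_at a f b g x : ls_mem FO f -> ls_mem FO g ->
  TK (lcomb FunK a f b g) x = Kadd k (Kmul k a (TK f x)) (Kmul k b (TK g x)).
Proof. intros Hf Hg; rewrite TK_linear by assumption; reflexivity. Qed.

Lemma TK_scal_at a f x : ls_mem FO f -> TK (vscal a f) x = Kmul k a (TK f x).
Proof.
  intro Hf; rewrite <- (lcomb_0r FunK a f f), TK_lcomb_at, Kmul_0l, Kadd_0 by assumption.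
  reflexivity.
Qed.

Lemma Bnu_mem {f} : B f -> ls_mem FO f.
Proof. intros [[Hf _] _]; exact Hf. Qed.

Lemma Bnu_abs_convex : abs_convex (V := FunK) B.
Proof.
  intros f g a b Hf Hg Hab; pose proof (Bnu_mem Hf); pose proof (Bnu_mem Hg).
  assert (Hbound : forall x, Kabs k (TK (lcomb FunK a f b g) x) * nu x <= 1).
  { intro x; rewrite TK_lcomb_at by assumption.
    pose proof (nu_pos x); pose proof (proj2 Hf x); pose proof (proj2 Hg x).
    pose proof (Kabs_ge0 a); pose proof (Kabs_ge0 b).
    pose proof (Kabs_add (Kmul k a (TK f x)) (Kmul k b (TK g x))); rewrite !Kabs_mul in *.
    apply Rle_trans with (Kabs k a * (Kabs k (TK f x) * nu x)
                          + Kabs k b * (Kabs k (TK g x) * nu x)); [nra|].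
    apply Rle_trans with (Kabs k a * 1 + Kabs k b * 1); [|lra].
    apply Rplus_le_compat; apply Rmult_le_compat_l; assumption. }
  split; [split; [apply ls_lcomb; assumption | exists 1; exact Hbound] | exact Hbound].
Qed.

Lemma Bnu_balanced c f : Kabs k c <= 1 -> B f -> B (vscal (V := FunK) c f).
Proof.
  intros Hc Hf; rewrite <- (lcomb_0r FunK c f f).
  apply Bnu_abs_convex; [assumption..|]; rewrite Kabs_0; lra.
Qed.

Lemma zero_dual : is_dual FO (fun _ => K0 k).
Proof.
  destruct om_inhabited as [x0].
  apply (dual_ext (dual_lcomb (K0 k) (K0 k) (TK_dual x0) (TK_dual x0))).
  intro; rewrite !Kmul_0l; apply Kadd_0.
Qed.

Lemma Bnu_scaled g N : ls_mem FO g -> 0 < N -> (forall x, Kabs k (TK g x) * nu x <= N) ->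
  B (vscal (V := FunK) (KofR k (/ N)) g).
Proof.
  intros Hg HN HgN.
  assert (Hbound : forall x, Kabs k (TK (vscal (V := FunK) (KofR k (/ N)) g) x) * nu x <= 1).
  { intro x; rewrite TK_scal_at, Kabs_mul, Kabs_KofR, Rabs_right by (auto; left; apply Rinv_0_lt_compat, HN).
    rewrite Rmult_assoc; apply Rmult_le_reg_l with N; [exact HN|].
    rewrite <- Rmult_assoc, Rinv_r, Rmult_1_l, Rmult_1_r by lra; apply HgN. }
  split; [split; [apply ls_scal, Hg | exists 1; exact Hbound] | exact Hbound].
Qed.

Lemma dual_le_scaled {z eps g N} : is_dual FO z -> 0 <= eps -> (forall h, B h -> Kabs k (z h) <= eps) ->
  ls_mem FO g -> 0 < N -> (forall x, Kabs k (TK g x) * nu x <= N) -> Kabs k (z g) <= eps * N.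
Proof.
  intros Hz Heps Hzeps Hg HN HgN.
  replace g with (vscal (V := FunK) (KofR k N) (vscal (V := FunK) (KofR k (/ N)) g))
    by (rewrite vscalA, <- KofR_mul, Rinv_r, KofR_1, vscal1 by lra; reflexivity).
  rewrite (lin_scal _ (proj1 Hz)), Kabs_mul, Kabs_KofR, Rabs_right, Rmult_comm
    by (try apply ls_scal; auto; lra).
  apply Rmult_le_compat_r; [lra|]; apply Hzeps, Bnu_scaled; assumption.
Qed.

Definition tcomb (l : list (K k * om)) (h : Om -> K k) : K k :=
  fold_right (fun p acc => Kadd k (Kmul k (fst p) (TK h (snd p))) acc) (K0 k) l.

Definition on_U (l : list (K k * om)) : Prop := Forall (fun p => U (snd p)) l.

Definition scale_comb (c : K k) (l : list (K k * om)) : list (K k * om) :=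
  map (fun p => (Kmul k c (fst p), snd p)) l.

Lemma tcomb_dual l : is_dual FO (tcomb l).
Proof.
  induction l as [|[a x] l IH]; [exact zero_dual|].
  apply (dual_ext (dual_lcomb a (K1 k) (TK_dual x) IH)).
  intro; simpl; rewrite Kmul_1; reflexivity.
Qed.

Lemma tcomb_app l1 l2 h : tcomb (l1 ++ l2) h = Kadd k (tcomb l1 h) (tcomb l2 h).
Proof.
  induction l1 as [|p l1 IH]; simpl; [rewrite Kadd_0l; reflexivity|].
  rewrite IH, Kadd_assoc; reflexivity.
Qed.

Lemma tcomb_scale c l h : tcomb (scale_comb c l) h = Kmul k c (tcomb l h).
Proof.
  induction l as [|p l IH]; simpl; [rewrite Kmul_0r; reflexivity|].
  rewrite IH, Kmul_addr, Kmul_assoc; reflexivity.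
Qed.

Section Approximation.
Variables (y : (Om -> K k) -> K k) (Hy : is_dual FO y) (eps : R) (Heps : 0 < eps).

Definition approx_error (l : list (K k * om)) (h : Om -> K k) : K k := Ksub k (y h) (tcomb l h).

Lemma approx_error_dual l : is_dual FO (approx_error l).
Proof. exact (dual_sub Hy (tcomb_dual l)). Qed.

(** A single point of [U] suffices unless [h] vanishes on [U], and then [h = 0]. *)
Lemma approx_pointwise {h} : B h -> exists l, on_U l /\ KRe k (approx_error l h) < eps.
Proof.
  intro Hh; destruct (classic (exists x, U x /\ TK h x <> K0 k)) as [[x [Ux Hx]]|Hno].
  - destruct (K_solve _ (KRe k (y h)) Hx) as [t Ht].
    exists ((t, x) :: nil); split; [repeat constructor; exact Ux|].
    unfold approx_error; simpl; rewrite KRe_sub, Kadd_0, Ht; lra.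
  - assert (Hh0 : h = fun _ => K0 k).
    { apply U_uniqueness; [apply Hh|]; intros x Ux.
      apply NNPP; intro; apply Hno; exists x; auto. }
    exists nil; split; [constructor|].
    unfold approx_error; simpl; rewrite KRe_sub, KRe_0.
    replace (y h) with (K0 k) by (rewrite Hh0; symmetry; apply (lin_zero _ (proj1 Hy))).
    rewrite KRe_0; lra.
Qed.

Lemma approx_error_convex t l1 l2 h :
  approx_error (scale_comb (KofR k t) l1 ++ scale_comb (KofR k (1 - t)) l2) h
  = Kadd k (Kmul k (KofR k t) (approx_error l1 h)) (Kmul k (KofR k (1 - t)) (approx_error l2 h)).
Proof.
  unfold approx_error; rewrite tcomb_app, !tcomb_scale; apply Ksub_affine.
  rewrite <- KofR_add, <- KofR_1; f_equal; ring.
Qed.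

Lemma approx_re_uniform : exists l, on_U l /\ forall h, B h -> KRe k (approx_error l h) <= eps.
Proof.
  set (I := {l | on_U l}).
  destruct (proj2 B_compact I (fun i h => KRe k (approx_error (proj1_sig i) h) < eps)) as [L HL].
  { intro i; apply dual_re_lt_open, approx_error_dual. }
  { intros h Hh; destruct (approx_pointwise Hh) as [l [Hl Hlt]]; exists (exist _ l Hl); exact Hlt. }
  set (F := fun g : (Om -> K k) -> R => exists l, on_U l /\ forall h, g h = KRe k (approx_error l h)).
  destruct (@finite_cover_minimax _ (fun t p q => lcomb FunK (KofR k t) p (KofR k (1 - t)) q) B F)
    with (eps := eps) (gs := map (fun i h => KRe k (approx_error (proj1_sig i) h)) L) (S := B)
    as [g [[l [Hl Hg]] Hgeps]].
  - intros g [l [_ Hg]] t p q _ Hp Hq; rewrite !Hg.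
    rewrite (proj1 (approx_error_dual l)) by (apply Bnu_mem; assumption).
    rewrite KRe_add, !KRe_realmul; reflexivity.
  - intros t g1 g2 _ [l1 [H1 Hg1]] [l2 [H2 Hg2]].
    set (l := scale_comb (KofR k t) l1 ++ scale_comb (KofR k (1 - t)) l2).
    exists (fun h => KRe k (approx_error l h)); split.
    + exists l; split; [apply Forall_app; split; apply Forall_map; assumption | reflexivity].
    + intro h; unfold l; rewrite approx_error_convex, KRe_add, !KRe_realmul, Hg1, Hg2; reflexivity.
  - exists (fun h => KRe k (approx_error nil h)), nil; split; [constructor | reflexivity].
  - intros g Hg; apply in_map_iff in Hg; destruct Hg as [[l Hl] [<- _]].
    exists l; split; [exact Hl | reflexivity].
  - intros t p q Ht Hp Hq; apply Bnu_abs_convex; [assumption..|].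
    rewrite !Kabs_KofR, !Rabs_right by lra; lra.
  - exact (fun _ H => H).
  - intros h Hh; destruct (HL h Hh) as [i [Hi Hlt]].
    eexists; split; [apply in_map_iff; exists i; split; [reflexivity | exact Hi]|]; simpl; lra.
  - exists l; split; [exact Hl|]; intros h Hh; rewrite <- Hg; apply Hgeps, Hh.
Qed.

Lemma approx_uniform : exists l, on_U l /\ forall h, B h -> Kabs k (approx_error l h) <= eps.
Proof.
  destruct approx_re_uniform as [l [Hl Hre]]; exists l; split; [exact Hl|].
  apply (balanced_re_le_abs_le _ _ (proj1 (approx_error_dual l)) (fun _ H => Bnu_mem H) Bnu_balanced Hre).
Qed.

End Approximation.

Variables (E : lcHs k) (G : (E -> K k) -> Prop) (f : om -> E).
Hypothesis G_bounded : determines_boundedness E G.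
Hypothesis E_locally_complete : locally_complete E.

Variables (ext : (E -> K k) -> Om -> K k) (bound : (E -> K k) -> R).
Hypothesis ext_mem : forall {e'}, G e' -> ls_mem FO (ext e').
Hypothesis bound_pos : forall {e'}, G e' -> 0 < bound e'.
Hypothesis ext_bound : forall {e'}, G e' -> forall x, Kabs k (TK (ext e') x) * nu x <= bound e'.
Hypothesis ext_on_U : forall {e'}, G e' -> forall x, U x -> TK (ext e') x = e' (f x).

Lemma G_linear {e'} : G e' -> is_linear_on E e'.
Proof. intro He; exact (proj1 (proj1 G_bounded e' He)). Qed.

Lemma G_bounded_set (A : E -> Prop) (C : (E -> K k) -> R) :
  (forall e', G e' -> forall x, A x -> Kabs k (e' x) <= C e') -> is_bounded E A.
Proof. intro H; apply G_bounded; intros e' He; exists (C e'); exact (H e' He). Qed.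

Lemma G_separating x : (forall e', G e' -> e' x = K0 k) -> x = vzero E.
Proof.
  intro H; apply (ls_haus E); [apply lcs_full|]; intro i.
  (* the multiples of [x] are weakly, hence strongly, bounded *)
  assert (Hmult : is_bounded E (fun z => exists n : nat, z = vscal (KofR k (INR n)) x)).
  { apply (G_bounded_set _ (fun _ => 0)); intros e' He z [n ->].
    rewrite (lin_scal _ (G_linear He)), H, Kmul_0r, Kabs_0 by (auto; apply lcs_full); lra. }
  destruct (Hmult i) as [C HC]; pose proof (sn_ge0 i (lcs_full E x)).
  destruct (Req_dec (ls_sn E i x) 0) as [|Hne]; [assumption|exfalso].
  destruct (INR_archimed (ls_sn E i x) C) as [n Hn]; [lra|].
  specialize (HC _ (ex_intro _ n eq_refl)).
  rewrite sn_scal_real, Rabs_right in HC by (try apply lcs_full; apply Rle_ge, pos_INR); lra.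
Qed.

Lemma G_eq a b : (forall e', G e' -> e' a = e' b) -> a = b.
Proof.
  intro H; rewrite <- (vsub_add E a b); replace (vsub E a b) with (vzero E); [apply vadd0|].
  symmetry; apply G_separating; intros e' He.
  rewrite (lin_sub _ (G_linear He)), H by (apply lcs_full || assumption); unfold Ksub; apply Kadd_opp.
Qed.

Definition Dball (x : E) : Prop := forall e', G e' -> Kabs k (e' x) <= bound e'.

Lemma Dball_closed : is_closed E Dball.
Proof.
  split; [intros; apply lcs_full|]; intros x _ Hx.
  apply not_all_ex_not in Hx; destruct Hx as [e' He'].
  apply imply_to_and in He'; destruct He' as [He Hgt]; apply Rnot_le_lt in Hgt.
  destruct (dual_bound (proj1 G_bounded e' He)) as [i [C [HC Hbd]]].
  set (r := Kabs k (e' x) - bound e').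
  exists i, (r / (C + 1)); split; [apply Rdiv_lt_0_compat; unfold r; lra|].
  intros z _ Hzx Dz; specialize (Dz e' He).
  pose proof (Hbd _ (lcs_full E (vsub E z x))) as Hd.
  rewrite (lin_sub _ (G_linear He)) in Hd by apply lcs_full.
  pose proof (Kabs_le_sub (e' x) (e' z)); pose proof (sn_ge0 i (lcs_full E (vsub E z x))).
  assert (Hr : (C + 1) * (r / (C + 1)) = r) by (field; lra).
  unfold r in *; nra.
Qed.

Lemma Dball_bounded : is_bounded E Dball.
Proof. apply (G_bounded_set _ bound); intros e' He x Hx; exact (Hx e' He). Qed.

Lemma Dball_abs_convex : abs_convex (V := E) Dball.
Proof.
  intros x z a b Hx Hz Hab e' He.
  rewrite (G_linear He) by apply lcs_full.
  pose proof (Hx e' He); pose proof (Hz e' He); pose proof (bound_pos He).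
  pose proof (Kabs_ge0 a); pose proof (Kabs_ge0 b).
  eapply Rle_trans; [apply Kabs_add|]; rewrite !Kabs_mul.
  apply Rle_trans with (Kabs k a * bound e' + Kabs k b * bound e'); [|nra].
  apply Rplus_le_compat; apply Rmult_le_compat_l; assumption.
Qed.

Lemma in_mult_Dball t x : 0 < t -> (forall e', G e' -> Kabs k (e' x) <= t * bound e') ->
  in_mult E Dball t x.
Proof.
  intros Ht Hx; exists (vscal (KofR k (/ t)) x); split.
  - intros e' He; rewrite (lin_scal _ (G_linear He)), Kabs_mul, Kabs_KofR by apply lcs_full.
    rewrite Rabs_right by (left; apply Rinv_0_lt_compat, Ht).
    apply Rmult_le_reg_l with t; [exact Ht|].
    rewrite <- Rmult_assoc, Rinv_r, Rmult_1_l by lra; apply Hx, He.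
  - rewrite vscalA, <- KofR_mul, Rinv_r, KofR_1, vscal1 by lra; reflexivity.
Qed.

Lemma in_mult_Dball_bound t x e' : 0 <= t -> in_mult E Dball t x -> G e' ->
  Kabs k (e' x) <= t * bound e'.
Proof.
  intros Ht [d [Hd ->]] He.
  rewrite (lin_scal _ (G_linear He)), Kabs_mul, Kabs_KofR, Rabs_right by (apply lcs_full || lra).
  apply Rmult_le_compat_l; [exact Ht | apply Hd, He].
Qed.

Definition fcomb (l : list (K k * om)) : E :=
  fold_right (fun p acc => vadd (vscal (fst p) (f (snd p))) acc) (vzero E) l.

Lemma G_fcomb e' l : G e' -> on_U l -> e' (fcomb l) = tcomb l (ext e').
Proof.
  intros He; induction l as [|[a x] l IH]; intro Hl; simpl; [apply (lin_zero _ (G_linear He))|].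
  inversion Hl as [|? ? Ux Hl']; subst.
  rewrite (lin_add _ (G_linear He)), (lin_scal _ (G_linear He)), IH, ext_on_U
    by (apply lcs_full || assumption); reflexivity.
Qed.

(** The differences [s n - s 0] form a Cauchy sequence in the normed space [E_D]; its limit plus
    [s 0] represents [a]. *)
Lemma represent_of_approx (a : (E -> K k) -> K k) (s : nat -> E) :
  (forall n e', G e' -> Kabs k (Ksub k (e' (s n)) (a e')) <= / INR (S n) * bound e') ->
  exists e, forall e', G e' -> e' e = a e'.
Proof.
  intro Hs; set (xs := fun n => vsub E (s n) (s O)).
  assert (Hpair : forall n m e', G e' ->
            Kabs k (Ksub k (e' (s n)) (e' (s m))) <= (/ INR (S n) + / INR (S m)) * bound e').
  { intros n m e' He; pose proof (Kabs_sub_tri (e' (s n)) (a e') (e' (s m))).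
    rewrite (Kabs_sub_sym (a e')) in H; pose proof (Hs n e' He); pose proof (Hs m e' He); lra. }
  destruct (E_locally_complete _ Dball_closed Dball_bounded Dball_abs_convex xs)
    as [x [_ Hconv]].
  - intro n; exists 2%nat; apply in_mult_Dball; [simpl; lra|]; intros e' He.
    unfold xs; rewrite (lin_sub _ (G_linear He)) by apply lcs_full.
    pose proof (Hpair n O e' He); pose proof (inv_succ_bounds n); pose proof (inv_succ_bounds O).
    pose proof (bound_pos He); simpl INR; nra.
  - intros eps Heps; destruct (inv_succ_small (eps / 2)) as [N HN]; [lra|].
    exists N; intros n m Hn Hm; apply in_mult_Dball; [exact Heps|]; intros e' He.
    unfold xs; rewrite !(lin_sub _ (G_linear He)), Ksub_sub_r by apply lcs_full.
    pose proof (Hpair n m e' He); pose proof (HN n Hn); pose proof (HN m Hm).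
    pose proof (bound_pos He); nra.
  - exists (vadd (s O) x); intros e' He; apply Ksub_small_eq; intros eta Heta.
    pose proof (bound_pos He) as Hb.
    destruct (Hconv (eta / (2 * bound e'))) as [N1 HN1]; [apply Rdiv_lt_0_compat; lra|].
    destruct (inv_succ_small (eta / (2 * bound e'))) as [N2 HN2]; [apply Rdiv_lt_0_compat; lra|].
    set (n := max N1 N2).
    pose proof (in_mult_Dball_bound (eta / (2 * bound e')) _ e'
                  ltac:(left; apply Rdiv_lt_0_compat; lra) (HN1 n (Nat.le_max_l _ _)) He) as Hx.
    pose proof (Hs n e' He) as Hn; pose proof (HN2 n (Nat.le_max_r _ _)).
    unfold xs in Hx; rewrite !(lin_sub _ (G_linear He)) in Hx by apply lcs_full.
    rewrite (lin_add _ (G_linear He)), (Ksub_telescope _ (e' (s n))) by apply lcs_full.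
    eapply Rle_trans; [apply Kabs_sub_le|].
    assert (Hhalf : eta / (2 * bound e') * bound e' = eta / 2) by (field; lra).
    assert (/ INR (S n) * bound e' <= eta / 2) by nra.
    lra.
Qed.

Lemma approx_sequence {y} : is_dual FO y -> exists ls : nat -> list (K k * om),
  forall n, on_U (ls n) /\ forall h, B h -> Kabs k (approx_error y (ls n) h) <= / INR (S n).
Proof.
  intro Hy; apply (choice (fun n l => on_U l /\ forall h, B h -> Kabs k (approx_error y l h) <= / INR (S n))).
  intro n; apply (approx_uniform y Hy), inv_succ_bounds.
Qed.

Lemma representative {y} : is_dual FO y -> exists e, forall e', G e' -> e' e = y (ext e').
Proof.
  intro Hy; destruct (approx_sequence Hy) as [ls Hls].
  apply (represent_of_approx _ (fun n => fcomb (ls n))); intros n e' He.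
  destruct (Hls n) as [Hl Hn].
  rewrite G_fcomb, Kabs_sub_sym by assumption.
  apply (dual_le_scaled (approx_error_dual y Hy (ls n))); try apply Hn; auto.
  apply Rlt_le, inv_succ_bounds.
Qed.

Lemma representative_map : exists u : ((Om -> K k) -> K k) -> E,
  forall y, is_dual FO y -> forall e', G e' -> e' (u y) = y (ext e').
Proof.
  apply (choice (fun y e => is_dual FO y -> forall e', G e' -> e' e = y (ext e'))); intro y.
  destruct (classic (is_dual FO y)) as [Hy|Hy].
  - destruct (representative Hy) as [e He]; exists e; intros _; exact He.
  - exists (vzero E); intro; contradiction.
Qed.

Section RepresentativeMap.
Variable u : ((Om -> K k) -> K k) -> E.
Hypothesis u_spec : forall y, is_dual FO y -> forall e', G e' -> e' (u y) = y (ext e').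

Lemma u_linear y1 y2 a b : is_dual FO y1 -> is_dual FO y2 ->
  u (fun g => Kadd k (Kmul k a (y1 g)) (Kmul k b (y2 g))) = lcomb E a (u y1) b (u y2).
Proof.
  intros H1 H2; apply G_eq; intros e' He.
  rewrite u_spec, (G_linear He), !u_spec by (try apply dual_lcomb; try apply lcs_full; assumption).
  reflexivity.
Qed.

Lemma u_bound {y s e'} : is_dual FO y -> 0 <= s -> (forall h, B h -> Kabs k (y h) <= s) -> G e' ->
  Kabs k (e' (u y)) <= s * bound e'.
Proof.
  intros Hy Hs Hys He; rewrite u_spec by assumption.
  apply (dual_le_scaled Hy Hs Hys (ext_mem He) (bound_pos He) (ext_bound He)).
Qed.

Lemma u_continuous (i : ls_idx E) : exists (Kset : (Om -> K k) -> Prop) (C : R),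
  abs_convex (V := FunK) Kset /\ is_compact FO Kset /\ 0 <= C /\
  forall y, is_dual FO y -> forall s, 0 <= s -> (forall g, Kset g -> Kabs k (y g) <= s) ->
    ls_sn E i (u y) <= C * s.
Proof.
  destruct (Dball_bounded i) as [Ci HCi].
  exists B, (Rmax Ci 0); split; [exact Bnu_abs_convex|]; split; [exact B_compact|].
  split; [apply Rmax_r|]; intros y Hy s Hs Hys.
  pose proof (Rmax_l Ci 0); pose proof (Rmax_r Ci 0).
  destruct (Rlt_or_le 0 s) as [Hs0|Hs0].
  - destruct (in_mult_Dball s (u y) Hs0 (fun e' He => u_bound Hy Hs Hys He)) as [d [Hd ->]].
    rewrite sn_scal_real, Rabs_right by (apply lcs_full || lra).
    pose proof (HCi d Hd); pose proof (sn_ge0 i (lcs_full E d)); nra.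
  - replace (u y) with (vzero E); [rewrite sn_zero; nra|].
    symmetry; apply G_separating; intros e' He; apply Kabs_eq0.
    pose proof (u_bound Hy Hs Hys He); pose proof (Kabs_ge0 (e' (u y))).
    replace s with 0 in * by lra; lra.
Qed.

Lemma u_in_eps : in_eps E FO u.
Proof. split; [intros; apply u_linear; assumption | exact u_continuous]. Qed.

Lemma u_polar_bounded : is_bounded E (fun e => exists y, Bnu_polar FO TK nu y /\ e = u y).
Proof.
  apply (G_bounded_set _ bound); intros e' He e [y [[Hy Hpol] ->]].
  rewrite <- (Rmult_1_l (bound e')); apply (u_bound Hy); [lra | exact Hpol | exact He].
Qed.

Lemma u_eval_on_U x : U x -> u (fun g => TK g x) = f x.
Proof.
  intro Ux; apply G_eq; intros e' He.
  rewrite u_spec, ext_on_U by (apply TK_dual || assumption); reflexivity.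
Qed.

End RepresentativeMap.

Variables (FOE : lc_subspace (fun_vs Om E)) (TE : (Om -> E) -> om -> E).
Hypothesis TE_consistent : consistent E FO FOE TE TK.

Lemma extension_exists : exists F, Feps_nu E FO TK nu F /\ forall x, U x -> TE F x = f x.
Proof.
  destruct representative_map as [u Hu].
  exists (Smap E u); split.
  - exists u; split; [exact (u_in_eps u Hu)|]; split; [reflexivity | exact (u_polar_bounded u Hu)].
  - intros x Ux; destruct (TE_consistent u (u_in_eps u Hu)) as [_ Hcons].
    rewrite (proj2 (Hcons x)); exact (u_eval_on_U u Hu x Ux).
Qed.

End Extension.

Lemma zero_in_eps {k : scalar_field} {Om : Type} (E : lcHs k) (FO : lc_subspace (fun_vs Om (Kvs k))) :
  in_eps E FO (fun _ => vzero E).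
Proof.
  split.
  - intros; unfold lcomb; rewrite !vscal_zero; symmetry; apply vadd0.
  - intro i; exists (fun _ => False), 0; repeat split.
    + intros ? ? ? ? [].
    + intros ? [].
    + intros I O _ _; exists nil; intros ? [].
    + lra.
    + intros; rewrite sn_zero; lra.
Qed.

Lemma FnuG_choice {k : scalar_field} {Om om : Type} {E : lcHs k} {FO : lc_subspace (fun_vs Om (Kvs k))}
  {TK : (Om -> K k) -> om -> K k} {nu : om -> R} {G : (E -> K k) -> Prop} {U : om -> Prop} {f : om -> E} :
  FnuG E FO TK nu G U f ->
  exists (ext : (E -> K k) -> Om -> K k) (bound : (E -> K k) -> R), forall e', G e' ->
    ls_mem FO (ext e') /\ 0 < bound e' /\
    (forall x, Kabs k (TK (ext e') x) * nu x <= bound e') /\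
    (forall x, U x -> TK (ext e') x = e' (f x)).
Proof.
  intro Hf.
  destruct (choice (fun e' (p : (Om -> K k) * R) => G e' ->
     ls_mem FO (fst p) /\ 0 < snd p /\ (forall x, Kabs k (TK (fst p) x) * nu x <= snd p) /\
     (forall x, U x -> TK (fst p) x = e' (f x)))) as [p Hp].
  - intro e'; destruct (classic (G e')) as [He|He].
    + destruct (Hf e' He) as [g [[Hg [C HC]] HgU]].
      exists (g, Rmax C 1); intros _; simpl; repeat split; auto.
      * pose proof (Rmax_r C 1); lra.
      * intro x; eapply Rle_trans; [apply HC | apply Rmax_l].
    + exists ((fun _ => K0 k), 1); intro; contradiction.
  - exists (fun e' => fst (p e')), (fun e' => snd (p e')); exact Hp.
Qed.

Theorem mainTheorem1
  (k : scalar_field) (Om om : Type) (HOm : inhabited Om) (Hom : inhabited om)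
  (E : lcHs k) (HEloc : locally_complete E)
  (G : (E -> K k) -> Prop) (HG : determines_boundedness E G)
  (FO : lc_subspace (fun_vs Om (Kvs k))) (FOE : lc_subspace (fun_vs Om E))
  (Hcomp : eps_into_compatible E FO FOE)
  (TE : (Om -> E) -> om -> E) (TK : (Om -> K k) -> om -> K k)
  (HTlin : T_linear E FO FOE TE TK)
  (Hcons : consistent E FO FOE TE TK) (Hstrong : strong E FO FOE TE TK)
  (nu : om -> R) (Hnu : forall x, 0 < nu x)
  (HBan : Fnu_Banach FO TK nu)
  (HBcomp : is_compact FO (Bnu FO TK nu))
  (U : om -> Prop) (HU : set_of_uniqueness FO TK nu U) :
  forall f : om -> E, FnuG E FO TK nu G U f ->
    exists F : Om -> E, Feps_nu E FO TK nu F /\ forall x, U x -> TE F x = f x.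
Proof.
  intros f Hf; destruct (FnuG_choice Hf) as [ext [bound Hext]].
  (* consistency, applied to the zero map, makes every [T_x] continuous *)
  assert (TK_dual : forall x, is_dual FO (fun g => TK g x))
    by (intro x; exact (proj1 (proj2 (Hcons _ (zero_in_eps E FO)) x))).
  apply (extension_exists FO TK nu U (proj1 HTlin) TK_dual Hnu Hom HBcomp HU E G f HG HEloc ext bound
           (fun e' He => proj1 (Hext e' He)) (fun e' He => proj1 (proj2 (Hext e' He)))
           (fun e' He => proj1 (proj2 (proj2 (Hext e' He))))
           (fun e' He => proj2 (proj2 (proj2 (Hext e' He)))) FOE TE Hcons).
Qed.
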